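(* Let $0<\upsilon<1/2$. For each $m=1,2,\dots$ let $\alpha_m,\beta_m>0$ with $\alpha_m+\beta_m=m$, and let $\mu_m$ be the truncated $\mathrm{Beta}(\alpha_m,\beta_m)$ probability measure on $[\upsilon,1-\upsilon]$, i.e., the standard $\mathrm{Beta}(\alpha_m,\beta_m)$ probability measure on $[0,1]$ restricted to $[\upsilon,1-\upsilon]$ and normalized. Let $I\subseteq[\upsilon,1-\upsilon]$ be a sub-interval containing $\theta$ in its interior. If $\left|\frac{\alpha_m}{m}-\theta\right|=\frac{o(\log m)}{\sqrt m}$ as $m\to\infty$, then $\inf_{m\ge1}\mu_m(I)>0$. *)

From Stdlib Require Import Reals.
From Coquelicot Require Import Coquelicot.
Open Scope R_scope.

Definition beta_density (a b x : R) : R :=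
  Rpower x (a - 1) * Rpower (1 - x) (b - 1).

(* The Beta normalising constant B(a,b) cancels in the
   ratio; the endpoints' inclusion is irrelevant (no atoms). *)
Definition trunc_beta_mass (ups a b c d : R) : R :=
  RInt (beta_density a b) c d / RInt (beta_density a b) ups (1 - ups).

(* Once alpha_m/m is within eta/2 of theta, with eta half the
   distance from theta to the boundary of I, the mode (alpha_m - 1)/(m - 2)
   of the Beta density f lies in [c + eta, d - eta] for all large m.  Then f
   is nondecreasing on [ups, c + eta] and nonincreasing on [d - eta, 1 - ups];
   comparing with f(c), the mass of [ups, c] is at most 1/eta times the mass
   of [c, c + eta], and symmetrically on the right, so
   mu_m(I) >= eta / (1 + eta).  The finitely many remaining m have positive
   mass. *)
From Stdlib Require Import Reals Lra Lia.
From Coquelicot Require Import Coquelicot.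
Open Scope R_scope.

Lemma RInt_le_length_mul (f : R -> R) u v K : u <= v -> ex_RInt f u v ->
  (forall x, u < x < v -> f x <= K) -> RInt f u v <= (v - u) * K.
Proof.
  intros Huv Hf HK. rewrite <- (RInt_const u v K : RInt (fun _ => K) u v = (v - u) * K).
  apply RInt_le; auto. apply ex_RInt_const.
Qed.

Lemma RInt_ge_length_mul (f : R -> R) u v K : u <= v -> ex_RInt f u v ->
  (forall x, u < x < v -> K <= f x) -> (v - u) * K <= RInt f u v.
Proof.
  intros Huv Hf HK. rewrite <- (RInt_const u v K : RInt (fun _ => K) u v = (v - u) * K).
  apply RInt_le; auto. apply ex_RInt_const.
Qed.

(* Both sides are bounded through (c - u) * (w - c) * f c. *)
Lemma RInt_nondecreasing_balance (f : R -> R) u c w : u <= c <= w ->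
  ex_RInt f u c -> ex_RInt f c w ->
  (forall x y, u <= x -> x <= y -> y <= w -> f x <= f y) ->
  (w - c) * RInt f u c <= (c - u) * RInt f c w.
Proof.
  intros Hc Hl Hr Hmono.
  assert (Hleft : RInt f u c <= (c - u) * f c)
    by (apply RInt_le_length_mul; [lra | auto | intros; apply Hmono; lra]).
  assert (Hright : (w - c) * f c <= RInt f c w)
    by (apply RInt_ge_length_mul; [lra | auto | intros; apply Hmono; lra]).
  nra.
Qed.

Lemma RInt_nonincreasing_balance (f : R -> R) u c w : u <= c <= w ->
  ex_RInt f u c -> ex_RInt f c w ->
  (forall x y, u <= x -> x <= y -> y <= w -> f y <= f x) ->
  (c - u) * RInt f c w <= (w - c) * RInt f u c.
Proof.
  intros Hc Hl Hr Hmono.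
  pose proof (RInt_nondecreasing_balance (fun x => - f x) u c w Hc
    (ex_RInt_opp _ _ _ Hl) (ex_RInt_opp _ _ _ Hr)) as Hbal.
  rewrite !(RInt_opp f) in Hbal by auto.
  unfold opp in Hbal; simpl in Hbal.
  assert (Hopp : forall x y, u <= x -> x <= y -> y <= w -> - f x <= - f y)
    by (intros x y Hx Hxy Hy; specialize (Hmono x y Hx Hxy Hy); lra).
  specialize (Hbal Hopp). lra.
Qed.

Lemma RInt_ratio_ge_of_unimodal (f : R -> R) u v c d eta :
  u <= c -> 0 < eta -> c + eta <= d - eta -> d <= v -> v - u <= 1 ->
  (forall x y, u <= x -> x <= y -> y <= v -> ex_RInt f x y) ->
  (forall x, u < x < v -> 0 <= f x) ->
  (forall x y, u <= x -> x <= y -> y <= c + eta -> f x <= f y) ->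
  (forall x y, d - eta <= x -> x <= y -> y <= v -> f y <= f x) ->
  0 < RInt f c d ->
  eta / (1 + eta) <= RInt f c d / RInt f u v.
Proof.
  intros Hu Heta Hcd Hd Hlen Hint Hpos Hinc Hdec Hmid.
  assert (Hge0 : forall x y, u <= x -> x <= y -> y <= v -> 0 <= RInt f x y)
    by (intros; apply RInt_ge_0; [lra | apply Hint; lra | intros; apply Hpos; lra]).
  assert (Hchasles : forall x y z, u <= x -> x <= y -> y <= z -> z <= v ->
      RInt f x z = RInt f x y + RInt f y z).
  { intros x y z Hx Hxy Hyz Hz.
    rewrite <- (RInt_Chasles f x y z) by (apply Hint; lra). reflexivity. }
  assert (Hleft : eta * RInt f u c <= RInt f c (c + eta)).
  { pose proof (RInt_nondecreasing_balance f u c (c + eta)) as Hbal.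
    pose proof (Hge0 c (c + eta)).
    assert ((c + eta - c) * RInt f u c <= (c - u) * RInt f c (c + eta))
      by (apply Hbal; [lra | apply Hint; lra | apply Hint; lra | auto]).
    nra. }
  assert (Hright : eta * RInt f d v <= RInt f (d - eta) d).
  { pose proof (RInt_nonincreasing_balance f (d - eta) d v) as Hbal.
    pose proof (Hge0 (d - eta) d).
    assert ((d - (d - eta)) * RInt f d v <= (v - d) * RInt f (d - eta) d)
      by (apply Hbal; [lra | apply Hint; lra | apply Hint; lra
                       | intros; apply Hdec; lra]).
    nra. }
  assert (Htotal : eta * RInt f u v <= (1 + eta) * RInt f c d).
  { rewrite (Hchasles u d v), (Hchasles u c d), (Hchasles c (d - eta) d),
      (Hchasles c (c + eta) (d - eta)) by lra.
    pose proof (Hge0 (c + eta) (d - eta)). lra. }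
  assert (HT : 0 < RInt f u v).
  { rewrite (Hchasles u d v), (Hchasles u c d) by lra.
    pose proof (Hge0 u c). pose proof (Hge0 d v). lra. }
  apply Rmult_le_reg_r with ((1 + eta) * RInt f u v); [nra |].
  replace (eta / (1 + eta) * ((1 + eta) * RInt f u v)) with (eta * RInt f u v)
    by (field; lra).
  replace (RInt f c d / RInt f u v * ((1 + eta) * RInt f u v))
    with ((1 + eta) * RInt f c d) by (field; lra).
  exact Htotal.
Qed.

Lemma beta_density_continuous a b x : 0 < x < 1 -> continuous (beta_density a b) x.
Proof.
  intros Hx. apply (ex_derive_continuous (V := R_CompleteNormedModule)).
  unfold beta_density, Rpower. auto_derive. lra.
Qed.

Lemma beta_density_pos a b x : 0 < x < 1 -> 0 < beta_density a b x.
Proof. intros. unfold beta_density, Rpower. apply Rmult_lt_0_compat; apply exp_pos. Qed.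

Lemma ex_RInt_beta_density a b u v : 0 < u -> u <= v -> v < 1 ->
  ex_RInt (beta_density a b) u v.
Proof.
  intros Hu Huv Hv. apply (ex_RInt_continuous (V := R_CompleteNormedModule)).
  intros z Hz. rewrite Rmin_left, Rmax_right in Hz by lra.
  apply beta_density_continuous. lra.
Qed.

Lemma beta_density_sym a b x : beta_density a b (1 - x) = beta_density b a x.
Proof. unfold beta_density. replace (1 - (1 - x)) with x by ring. apply Rmult_comm. Qed.

Lemma ln_le_sub_1 t : 0 < t -> ln t <= t - 1.
Proof. intros Ht. pose proof (exp_ineq1_le (ln t)). rewrite exp_ln in *; lra. Qed.

Lemma ln_sub_bounds x y : 0 < x -> x <= y ->
  (y - x) / y <= ln y - ln x <= (y - x) / x.
Proof.
  intros Hx Hxy. rewrite <- ln_div by lra. split.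
  - pose proof (ln_le_sub_1 (x / y) ltac:(apply Rdiv_lt_0_compat; lra)) as Hln.
    rewrite ln_div in Hln by lra. rewrite ln_div by lra.
    replace ((y - x) / y) with (1 - x / y) by (field; lra). lra.
  - replace ((y - x) / x) with (y / x - 1) by (field; lra).
    apply ln_le_sub_1, Rdiv_lt_0_compat; lra.
Qed.

(* The logarithm of the density, p ln x + q ln (1 - x), has derivative
   (p - (p + q) x) / (x (1 - x)); the chord bounds of ln replace the
   derivative. *)
Lemma log_beta_le_before_mode p q x y : 0 < x -> x <= y -> y < 1 ->
  0 <= p -> 0 <= q -> (p + q) * y <= p ->
  p * ln x + q * ln (1 - x) <= p * ln y + q * ln (1 - y).
Proof.
  intros Hx Hxy Hy Hp Hq Hmode.
  destruct (ln_sub_bounds x y) as [Hxy_ln _]; [lra | lra |].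
  destruct (ln_sub_bounds (1 - y) (1 - x)) as [_ Hxy_ln1]; [lra | lra |].
  assert (Hslope : 0 <= p * ((y - x) / y) - q * ((y - x) / (1 - y))).
  { replace (p * ((y - x) / y) - q * ((y - x) / (1 - y)))
      with ((y - x) / (y * (1 - y)) * (p - (p + q) * y)) by (field; lra).
    apply Rmult_le_pos; [| lra].
    apply Rdiv_le_0_compat; [lra | apply Rmult_lt_0_compat; lra]. }
  replace ((1 - x) - (1 - y)) with (y - x) in Hxy_ln1 by ring.
  assert (p * ((y - x) / y) <= p * (ln y - ln x)) by (apply Rmult_le_compat_l; lra).
  assert (q * (ln (1 - x) - ln (1 - y)) <= q * ((y - x) / (1 - y)))
    by (apply Rmult_le_compat_l; lra).
  lra.
Qed.

Lemma beta_density_le_before_mode a b x y : 1 <= a -> 1 <= b ->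
  0 < x -> x <= y -> y < 1 -> (a + b - 2) * y <= a - 1 ->
  beta_density a b x <= beta_density a b y.
Proof.
  intros Ha Hb Hx Hxy Hy Hmode. unfold beta_density, Rpower.
  rewrite <- !exp_plus.
  assert (Hlog : (a - 1) * ln x + (b - 1) * ln (1 - x)
                 <= (a - 1) * ln y + (b - 1) * ln (1 - y))
    by (apply log_beta_le_before_mode; lra).
  destruct Hlog as [Hlt | ->]; [left; apply exp_increasing, Hlt | right; reflexivity].
Qed.

Lemma beta_density_le_after_mode a b x y : 1 <= a -> 1 <= b ->
  0 < x -> x <= y -> y < 1 -> a - 1 <= (a + b - 2) * x ->
  beta_density a b y <= beta_density a b x.
Proof.
  intros Ha Hb Hx Hxy Hy Hmode.
  assert (Hsym : forall z, beta_density a b z = beta_density b a (1 - z))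
    by (intros z; rewrite <- beta_density_sym; f_equal; ring).
  rewrite !Hsym. apply beta_density_le_before_mode; [lra .. | nra].
Qed.

Lemma trunc_beta_mass_pos ups a b c d : 0 < ups -> ups <= c -> c < d -> d <= 1 - ups ->
  0 < trunc_beta_mass ups a b c d.
Proof.
  intros. unfold trunc_beta_mass. apply Rdiv_lt_0_compat;
    (apply RInt_gt_0; [lra | intros; apply beta_density_pos; lra
                       | intros; apply beta_density_continuous; lra]).
Qed.

Lemma trunc_beta_mass_ge_of_mode_inside ups a b c d eta :
  0 < ups -> ups <= c -> 0 < eta -> c + eta <= d - eta -> d <= 1 - ups ->
  2 <= a + b -> (a + b - 2) * (c + eta) <= a - 1 <= (a + b - 2) * (d - eta) ->
  eta / (1 + eta) <= trunc_beta_mass ups a b c d.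
Proof.
  intros Hups Hc Heta Hcd Hd Hab [Hleft Hright].
  assert (Ha : 1 <= a) by nra.
  assert (Hb : 1 <= b) by nra.
  apply RInt_ratio_ge_of_unimodal; try lra.
  - intros x y Hx Hxy Hy. apply ex_RInt_beta_density; lra.
  - intros x Hx. left. apply beta_density_pos. lra.
  - intros x y Hx Hxy Hy. apply beta_density_le_before_mode; try lra. nra.
  - intros x y Hx Hxy Hy. apply beta_density_le_after_mode; try lra. nra.
  - apply RInt_gt_0; [lra | intros; apply beta_density_pos; lra
                     | intros; apply beta_density_continuous; lra].
Qed.

(* The mode (a - 1) / (a + b - 2) is within eta of a / (a + b) once
   (a + b) * eta / 2 >= 1. *)
Lemma beta_mode_inside a b theta c d eta : 0 < eta -> 0 <= c -> d <= 1 ->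
  c + 2 * eta <= theta <= d - 2 * eta -> 1 <= (a + b) * (eta / 2) ->
  Rabs (a / (a + b) - theta) <= eta / 2 ->
  2 <= a + b /\ (a + b - 2) * (c + eta) <= a - 1 <= (a + b - 2) * (d - eta).
Proof.
  intros Heta Hc Hd Htheta Hlarge Hclose.
  set (s := a + b) in *.
  assert (Hs2 : 2 <= s) by nra.
  assert (Ha : a = a / s * s) by (field; lra).
  apply Rabs_le_between in Hclose.
  assert (Hlo : (theta - eta / 2) * s <= a)
    by (rewrite Ha at 1; apply Rmult_le_compat_r; lra).
  assert (Hhi : a <= (theta + eta / 2) * s)
    by (rewrite Ha at 1; apply Rmult_le_compat_r; lra).
  split; [lra | split; nra].
Qed.

Lemma ln_le_2_sqrt x : 0 < x -> ln x <= 2 * sqrt x.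
Proof.
  intros Hx. pose proof (sqrt_lt_R0 x Hx) as Hsqrt.
  rewrite <- (sqrt_sqrt x) at 1 by lra. rewrite ln_mult by auto.
  pose proof (ln_le_sub_1 _ Hsqrt). lra.
Qed.

Lemma close_of_little_o_log_over_sqrt (r : nat -> R) theta :
  (forall eps, 0 < eps -> exists N : nat, forall m : nat, (N <= m)%nat ->
     Rabs (r m - theta) * sqrt (INR m) <= eps * ln (INR m)) ->
  forall eps, 0 < eps -> exists N : nat, forall m : nat, (N <= m)%nat ->
    Rabs (r m - theta) <= eps.
Proof.
  intros Ho eps Heps. destruct (Ho (eps / 2)) as [N HN]; [lra |].
  exists (Nat.max N 1). intros m Hm.
  assert (Hx : 1 <= INR m) by (apply (le_INR 1); lia).
  pose proof (sqrt_lt_R0 (INR m) ltac:(lra)) as Hsqrt.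
  pose proof (ln_le_2_sqrt (INR m) ltac:(lra)) as Hln.
  pose proof (HN m ltac:(lia)) as Hm'.
  apply Rmult_le_reg_r with (sqrt (INR m)); [auto | nra].
Qed.

Lemma pos_lower_bound_of_eventually_ge (P : nat -> R) N delta : 0 < delta ->
  (forall m, (1 <= m)%nat -> 0 < P m) ->
  (forall m, (1 <= m)%nat -> (N <= m)%nat -> delta <= P m) ->
  exists delta', 0 < delta' /\ forall m, (1 <= m)%nat -> delta' <= P m.
Proof.
  revert delta. induction N as [| n IH]; intros delta Hdelta Hpos Hev.
  - exists delta. split; [auto | intros m Hm; apply Hev; lia].
  - destruct (Nat.le_gt_cases 1 n) as [Hn | Hn].
    + apply (IH (Rmin delta (P n))); auto.
      * apply Rmin_glb_lt; auto.
      * intros m Hm Hnm. destruct (Nat.eq_dec m n) as [-> | Hne]; [apply Rmin_r |].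
        apply Rle_trans with delta; [apply Rmin_l | apply Hev; lia].
    + apply (IH delta); auto. intros m Hm _. apply Hev; lia.
Qed.

Theorem lemma9 (ups theta c d : R) (alpha beta : nat -> R) :
  0 < ups < 1 / 2 ->
  (forall m : nat, (1 <= m)%nat ->
     0 < alpha m /\ 0 < beta m /\ alpha m + beta m = INR m) ->
  ups <= c -> d <= 1 - ups -> c < theta < d ->
  (forall eps : R, 0 < eps -> exists N : nat, forall m : nat, (N <= m)%nat ->
     Rabs (alpha m / INR m - theta) * sqrt (INR m) <= eps * ln (INR m)) ->
  exists delta : R, 0 < delta /\
    forall m : nat, (1 <= m)%nat -> delta <= trunc_beta_mass ups (alpha m) (beta m) c d.
Proof.
  intros Hups Hab Hc Hd Htheta Ho.
  set (eta := Rmin (theta - c) (d - theta) / 2).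
  assert (Heta_c : 2 * eta <= theta - c) by (pose proof (Rmin_l (theta - c) (d - theta)); unfold eta; lra).
  assert (Heta_d : 2 * eta <= d - theta) by (pose proof (Rmin_r (theta - c) (d - theta)); unfold eta; lra).
  assert (Heta : 0 < eta) by (unfold eta; pose proof (Rmin_glb_lt (theta - c) (d - theta) 0); lra).
  destruct (close_of_little_o_log_over_sqrt (fun m => alpha m / INR m) theta Ho (eta / 2))
    as [N Hclose]; [lra |].
  destruct (archimed_cor1 (eta / 2)) as [K [HK HK0]]; [lra |].
  assert (HK_large : 1 <= INR K * (eta / 2)).
  { assert (0 < INR K) by (apply lt_0_INR; lia).
    apply Rmult_lt_compat_l with (r := INR K) in HK; auto.
    rewrite Rinv_r in HK; lra. }
  apply (pos_lower_bound_of_eventually_ge _ (Nat.max N K) (eta / (1 + eta))).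
  - apply Rdiv_lt_0_compat; lra.
  - intros m Hm. apply trunc_beta_mass_pos; lra.
  - intros m Hm HNm. destruct (Hab m Hm) as [Ha [Hb Hsum]].
    assert (Hm_large : 1 <= INR m * (eta / 2)).
    { pose proof (le_INR K m ltac:(lia)). nra. }
    pose proof (Hclose m ltac:(lia)) as Hm_close. rewrite <- Hsum in Hm_large, Hm_close.
    destruct (beta_mode_inside (alpha m) (beta m) theta c d eta) as [H2 Hmode]; try lra.
    apply trunc_beta_mass_ge_of_mode_inside; lra.
Qed.
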